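(* Let $X$ be a locally compact Hausdorff space and consider a commutative square of pointed extensions of $X$ with $X_+\to X''_\ast$, $X_+\to X'_\ast$, $X''_\ast\to X^+$, $X'_\ast\to X^+$. If this square is simultaneously a pullback and a pushout in the category of compactly generated Hausdorff spaces, then the canonical relations $X'_\ast\to(X''_\ast)^\neg$ and $X''_\ast\to(X'_\ast)^\neg$ are the universal relations to the well-pointed replacements; i.e. $(X''_\ast)^\neg=(X'_\ast)^{\neg\neg}$ and $(X'_\ast)^\neg=(X''_\ast)^{\neg\neg}$ via these relations.
   Context: A pointed extension of $X$ is a compactly generated Hausdorff topology on $\ast\amalg X$ extending that of $X$; they form a poset with $X_\ast\le X'_\ast$ (a ''relation'' $X_\ast\to X'_\ast$) iff the identity map is continuous; $X_+$ (disjoint basepoint) is initial and $X^+$ (one-point compactification) is final. The negation $X_\ast^\neg$ is the final pointed extension $X'_\ast$ for which $X_+\to X_\ast\times_{X^+}X'_\ast$ is a homeomorphism. There is a canonical relation $X_\ast\to X_\ast^{\neg\neg}$; $X_\ast$ is well-pointed if it is an equality, and $X_\ast\to X_\ast^{\neg\neg}$ is the well-pointed replacement (left adjoint to the inclusion of well-pointed extensions). *)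

(* Raw topologies on a type T are represented as
   their set of open sets  O : set (set T); this is needed because pointed
   extensions are several topologies on the same carrier  option X. *)
From mathcomp Require Import all_boot all_order all_algebra.
From mathcomp Require Import all_classical all_reals all_analysis.
Set Implicit Arguments. Unset Strict Implicit. Unset Printing Implicit Defensive.
Local Open Scope classical_set_scope.

Section RawTopology.
Variable T : Type.
Implicit Types (O : set (set T)) (A K : set T).

Definition is_topology O :=
  [/\ O set0, O setT,
      (forall U V, O U -> O V -> O (U `&` V)) &
      (forall (I : Type) (F : I -> set T), (forall i, O (F i)) ->
          O (\bigcup_i F i))].

Definition closedT O A := O (~` A).

Definition compactT O K :=
  forall (I : Type) (F : I -> set T), (forall i, O (F i)) ->
    K `<=` \bigcup_i F i ->
    exists J : set I, finite_set J /\ K `<=` \bigcup_(i in J) F i.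

Definition hausdorffT O :=
  forall x y : T, x <> y -> exists U V, [/\ O U, O V, U x, V y & U `&` V = set0].

Definition kspaceT O :=
  forall A, (forall K, compactT O K ->
               exists C, closedT O C /\ A `&` K = C `&` K) -> closedT O A.

Definition is_cgh O := [/\ is_topology O, hausdorffT O & kspaceT O].
End RawTopology.

Definition continuousT (A B : Type) (OA : set (set A)) (OB : set (set B))
  (f : A -> B) := forall V, OB V -> OA (f @^-1` V).

Section PointedExtensions.
Variable X : topologicalType.

(* a pointed extension of X: a compactly generated Hausdorff topology on
   * ⊔ X = option X (basepoint None) inducing the topology of X on Some X *)
Definition pointed_ext (O : set (set (option X))) :=
  is_cgh O /\ (forall U : set X, open U <-> exists V, O V /\ U = Some @^-1` V).

Definition plus_top : set (set (option X)) :=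
  [set V | open (Some @^-1` V)].

Definition oneptc_top : set (set (option X)) :=
  [set V | open (Some @^-1` V) /\ (V None -> compact (~` (Some @^-1` V)))].

Definition rel_ext (O1 O2 : set (set (option X))) := continuousT O1 O2 id.

(* the square  X_+ -> O1, X_+ -> O2, O1 -> X^+, O2 -> X^+ (all identities)
   is a pullback in CGHaus, i.e. X_+ -> O1 x_{X^+} O2 is a homeomorphism:
   universal property against every compactly generated Hausdorff space Z *)
Definition is_pullback_sq (O1 O2 : set (set (option X))) :=
  forall (Z : Type) (OZ : set (set Z)), is_cgh OZ ->
  forall f : Z -> option X,
    continuousT OZ O1 f -> continuousT OZ O2 f -> continuousT OZ plus_top f.

Definition is_pushout_sq (O1 O2 : set (set (option X))) :=
  forall (Z : Type) (OZ : set (set Z)), is_cgh OZ ->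
  forall g : option X -> Z,
    continuousT O1 OZ g -> continuousT O2 OZ g -> continuousT oneptc_top OZ g.

Definition is_negation (O N : set (set (option X))) :=
  [/\ pointed_ext N, is_pullback_sq O N &
      forall N', pointed_ext N' -> is_pullback_sq O N' -> rel_ext N' N].
End PointedExtensions.

(* Write X'_* = O1, X''_* = O2 and N1 = O1^¬.  Since the square is a pullback
   and N1 is final among such extensions, O2 -> N1.  Conversely, let V be open
   in O2 and containing the basepoint.  Refine N1 by making D = V \ {*}
   discrete.  For H open in O1 around the basepoint, H ∪ V is open in both O1
   and O2, hence in X^+ because the square is a pushout; so its complement is
   compact and is separated from the basepoint by an N1-open set.  This makes
   the identity continuous from the refinement to O1, and the pullback property
   of O1 and N1 then makes {*} open there, which shows V open in N1.  Hence
   O1^¬ = O2, symmetrically O2^¬ = O1, and the theorem follows by rewriting. *)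
From Pilot Require Import Defs.
From mathcomp Require Import all_boot all_order all_algebra.
From mathcomp Require Import all_classical all_reals all_analysis.
Set Implicit Arguments. Unset Strict Implicit. Unset Printing Implicit Defensive.
Local Open Scope classical_set_scope.

Section RawTopologyFacts.
Variable T : Type.
Implicit Types (O : set (set T)) (D U V : set T).

Lemma topologyU2 O U V : is_topology O -> O U -> O V -> O (U `|` V).
Proof.
case=> _ _ _ tU OU OV.
have -> : U `|` V = \bigcup_(b : bool) (if b then U else V).
  apply/seteqP; split=> x.
    by case=> h; [exists true | exists false].
  by case=> -[] _ h; [left | right].
by apply: tU => -[].
Qed.

Lemma hausdorffT_openC1 O : is_topology O -> hausdorffT O ->
  forall p, O (~` [set p]).
Proof.
move=> [_ _ _ tU] hO p.
have /choice[F HF] : forall y : {y | y <> p},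
    exists U, [/\ O U, U (sval y) & ~ U p].
  move=> [y yp] /=; have [U [V [OU OV Uy Vp UV]]] := hO y p yp.
  exists U; split=> // Up.
  by have : (U `&` V) p by []; rewrite UV.
have -> : ~` [set p] = \bigcup_y F y.
  apply/seteqP; split=> x.
    by move=> xp; exists (exist _ x xp) => //; case: (HF (exist _ x xp)).
  by case=> y _ Fx xp; case: (HF y) => _ _; rewrite -xp.
by apply: tU => y; case: (HF y).
Qed.

Lemma cgh_setI O0 O1 O2 : is_cgh O1 -> is_cgh O2 -> hausdorffT O0 ->
  continuousT O1 O0 id -> continuousT O2 O0 id -> is_cgh (O1 `&` O2).
Proof.
move=> [[a0 aT aI aU] _ k1] [[b0 bT bI bU] _ k2] h0 r1 r2.
split.
- split=> //.
  + by move=> U V [? ?] [? ?]; split; [apply: aI | apply: bI].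
  + by move=> I F hF; split; [apply: aU | apply: bU] => i; case: (hF i).
- move=> x y xy; have [U [V [OU OV Ux Vy UV]]] := h0 x y xy.
  by exists U, V; split=> //; split; first [exact: r1 | exact: r2].
- move=> A hA; split.
  + apply: k1 => K cK; have [|C [[? _] eC]] := hA K; last by exists C.
    by move=> I F hF; apply: cK => i; case: (hF i).
  + apply: k2 => K cK; have [|C [[_ ?] eC]] := hA K; last by exists C.
    by move=> I F hF; apply: cK => i; case: (hF i).
Qed.

(* The open sets are those agreeing off D with an O-open set; when D is O-open,
   this refines O by making the points of D isolated. *)
Definition discretize O D : set (set T) :=
  [set V | exists W, O W /\ forall z, ~ D z -> (V z <-> W z)].

Lemma discretize_open O D V : O V -> discretize O D V.
Proof. by move=> OV; exists V. Qed.

Lemma discretize_topology O D : is_topology O -> is_topology (discretize O D).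
Proof.
move=> [t0 tT tI tU]; split.
- by exists set0.
- by exists setT.
- move=> U V [WU [OU hU]] [WV [OV hV]]; exists (WU `&` WV); split; first exact: tI.
  by move=> z Dz; have := hU z Dz; have := hV z Dz; rewrite /setI /=; tauto.
- move=> I F hF; have /choice[W hW] := hF.
  exists (\bigcup_i W i); split; first by apply: tU => i; case: (hW i).
  by move=> z Dz; split=> -[i _ h]; exists i => //; apply/(proj2 (hW i) z Dz).
Qed.

Lemma compactT_discretize O D K : O D -> compactT O K ->
  compactT (discretize O D) (K `&` ~` D).
Proof.
move=> OD cK I F hF cov; have /choice[W hW] := hF.
pose G (o : option I) := if o is Some i then W i else D.
have [J [fJ cJ]] : exists J, finite_set J /\ K `<=` \bigcup_(o in J) G o.
  apply: cK => [[i|//] | z Kz]; first by case: (hW i).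
  have [Dz | nDz] := pselect (D z); first by exists None.
  have [i _ Fiz] := cov z (conj Kz nDz); exists (Some i) => //=.
  exact/(proj2 (hW i) z nDz).
exists (Some @^-1` J); split; first by apply: finite_preimage => // a b _ _ [].
move=> z [Kz nDz]; have [[i|] Ji Gz //] := cJ z Kz.
by exists i => //; apply/(proj2 (hW i) z nDz).
Qed.

Lemma discretize_cgh O D : is_cgh O -> O D -> is_cgh (discretize O D).
Proof.
move=> [tO hO kO] OD; split; first exact: discretize_topology.
  move=> x y xy; have [U [V [OU OV Ux Vy UV]]] := hO x y xy.
  by exists U, V; split=> //; exact: discretize_open.
move=> A hA.
have closedAD : Defs.closedT O (A `&` ~` D).
  apply: kO => K cK.
  have [C [[W [OW hW]] eC]] := hA _ (compactT_discretize OD cK).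
  exists (~` (W `|` D)); split.
    by rewrite /Defs.closedT setCK; apply: topologyU2.
  apply/seteqP; split=> z /=.
    move=> [[Az nDz] Kz]; split=> //; case=> [Wz|//].
    have : (A `&` (K `&` ~` D)) z by [].
    by rewrite eC => -[Cz _]; apply: (proj2 (hW z nDz) Wz).
  move=> [nWDz Kz]; have nDz : ~ D z by move=> Dz; apply: nWDz; right.
  have : (C `&` (K `&` ~` D)) z.
    by split=> //; apply: contrapT => nCz; apply: nWDz; left; apply/(hW z nDz).
  by rewrite -eC => -[].
exists (~` (A `&` ~` D)); split=> // z nDz; split=> [h [] // | h Az].
by apply: h.
Qed.

End RawTopologyFacts.

Section PointedExtensionFacts.
Variable X : topologicalType.
Implicit Types (O P : set (set (option X))) (V : set (option X)).

Lemma pointed_ext_open_some O V : pointed_ext O -> O V -> open (Some @^-1` V).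
Proof. by move=> [_ eO] OV; apply/(eO _).2; exists V. Qed.

Lemma pointed_ext_open_unpointed O V : pointed_ext O ->
  ~ V None -> open (Some @^-1` V) -> O V.
Proof.
move=> [[tO hO _] eO] VN oV; have [W [OW eW]] := (eO _).1 oV.
have -> : V = W `&` ~` [set None].
  apply/seteqP; split=> -[x|] //=.
  - by move=> Vx; split=> //; have : (Some @^-1` V) x by []; rewrite eW.
  - by move=> [Wx _]; have : (Some @^-1` W) x by []; rewrite -eW.
  - by case.
by case: (tO) => _ _ tI _; apply: tI => //; exact: hausdorffT_openC1.
Qed.

Lemma pointed_ext_openD_None O P V : pointed_ext O -> pointed_ext P ->
  P V -> O (V `\ None).
Proof.
move=> eO eP PV; apply: pointed_ext_open_unpointed => //; first by move=> [_]; apply.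
have -> : Some @^-1` (V `\ None) = Some @^-1` V.
  by apply/seteqP; split=> x /=; [case | split].
exact: pointed_ext_open_some PV.
Qed.

Lemma pointed_ext_separate_compact O C : pointed_ext O -> compact C ->
  exists E, [/\ O E, E None & forall x, C x -> ~ E (Some x)].
Proof.
move=> eO cC; apply: contrapT => noE.
have meets E : O E -> E None -> exists x, C x /\ E (Some x).
  move=> OE EN; apply: contrapT => hx; apply: noE; exists E; split=> // x Cx Ex.
  by apply: hx; exists x.
case: (eO) => -[[_ tT tI _] hO _] _.
pose F := filter_from [set E | O E /\ E None] (fun E => C `&` Some @^-1` E).
have PF : ProperFilter F.
  apply: filter_from_proper; last first.
    by move=> E [OE EN]; have [x [Cx Ex]] := meets E OE EN; exists x.
  apply: filter_from_filter; first by exists setT.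
  move=> U V [OU NU] [OV NV]; exists (U `&` V); first by split=> //; apply: tI.
  by move=> x [Cx [Ux Vx]].
have FC : F C by exists setT => // x [].
have [x [Cx clx]] := cC F PF FC.
have NSx : None <> Some x by [].
have [U [V [OU OV UN Vx UV]]] := hO None (Some x) NSx.
have FU : F (C `&` Some @^-1` U) by exists U.
have nV : nbhs x (Some @^-1` V).
  by apply: open_nbhs_nbhs; split=> //; exact: pointed_ext_open_some OV.
have [y [[_ Uy] Vy]] := clx _ _ FU nV.
by have : (U `&` V) (Some y) by []; rewrite UV.
Qed.

Lemma pullback_sq_sym O P : is_pullback_sq O P -> is_pullback_sq P O.
Proof. by move=> h Z OZ hZ f fP fO; exact: h. Qed.

Lemma pushout_sq_sym O P : is_pushout_sq O P -> is_pushout_sq P O.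
Proof. by move=> h Z OZ hZ g gP gO; exact: h. Qed.

End PointedExtensionFacts.

Section OnePointCompactification.
Variable X : topologicalType.
Hypothesis hX : hausdorff_space X.
Hypothesis lcX : locally_compact [set: X].

Lemma oneptc_image_open (U : set X) : open U -> oneptc_top (Some @` U).
Proof.
move=> oU; split; last by case.
suff -> : Some @^-1` (Some @` U) = U by [].
by apply/seteqP; split=> x /=; [case=> y Uy [<-] | exists x].
Qed.

Lemma oneptc_separate_None (x : X) : exists U V,
  [/\ oneptc_top U, oneptc_top V, U None, V (Some x) & U `&` V = set0].
Proof.
have [K nK [cK _]] := @lcX x I.
move: nK; rewrite withinET nbhsE => -[B [oB Bx] BK].
exists (fun o => if o is Some y then ~ K y else True), (Some @` B); split=> //.
- have preK : Some @^-1` (fun o => if o is Some y then ~ K y else True) = ~` K by [].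
  split; first by rewrite preK openC; exact: compact_closed.
  by move=> _; rewrite preK setCK.
- exact: oneptc_image_open.
- apply/seteqP; split=> // -[y|] [] //= Ky [z Bz] // [zy].
  by apply: Ky; rewrite -zy; apply: BK.
Qed.

Lemma oneptc_hausdorff : hausdorffT (@oneptc_top X).
Proof.
move=> [a|] [b|] ab.
- have ab' : a != b by apply/eqP => e; apply: ab; rewrite e.
  have := hX; rewrite open_hausdorff => /(_ a b ab') [[A B] /= [aA bB] [oA oB /eqP AB]].
  exists (Some @` A), (Some @` B); split; try exact: oneptc_image_open.
  + by exists a => //; rewrite -in_setE.
  + by exists b => //; rewrite -in_setE.
  + apply/seteqP; split=> // _ [[y Ay <-] [z Bz [zy]]].
    have ABy : (A `&` B) y by split=> //; rewrite -zy.
    by move: ABy; rewrite AB.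
- have [U [V [oU oV UN Va UV]]] := oneptc_separate_None a.
  by exists V, U; split=> //; rewrite setIC.
- exact: oneptc_separate_None.
- by case: ab.
Qed.

End OnePointCompactification.

Section NegationOfSquare.
Variable X : topologicalType.
Hypothesis hX : hausdorff_space X.
Hypothesis lcX : locally_compact [set: X].
Variables O1 O2 N1 : set (set (option X)).
Hypotheses (e1 : pointed_ext O1) (e2 : pointed_ext O2).
Hypotheses (s1 : rel_ext O1 (@oneptc_top X)) (s2 : rel_ext O2 (@oneptc_top X)).
Hypotheses (pb : is_pullback_sq O2 O1) (po : is_pushout_sq O2 O1).
Hypothesis n1 : is_negation O1 N1.

Lemma pushout_sq_open V : O1 V -> O2 V -> oneptc_top V.
Proof.
move=> O1V O2V.
have cgh12 := cgh_setI e2.1 e1.1 (oneptc_hausdorff hX lcX) s2 s1.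
exact: (po cgh12 (fun W h => proj1 h) (fun W h => proj2 h) (conj O2V O1V)).
Qed.

Lemma rel_ext_into_negation : rel_ext O2 N1.
Proof. by case: n1 => _ _; apply => //; exact: pullback_sq_sym. Qed.

Lemma discretize_negation_continuous V : O2 V -> V None ->
  continuousT (discretize N1 (V `\ None)) O1 id.
Proof.
move=> O2V VN H O1H; case: n1 => eN1 _ _.
have [HN | HN] := pselect (H None); last first.
  apply: discretize_open; apply: pointed_ext_open_unpointed eN1 HN _.
  exact: pointed_ext_open_some e1 O1H.
have O1HV : O1 (H `|` V).
  have -> : H `|` V = H `|` V `\ None.
    by apply/seteqP; split=> -[x|] /=; intuition congruence.
  by apply: topologyU2; [case: e1 => -[] | | exact: pointed_ext_openD_None e1 e2 O2V].
have O2HV : O2 (H `|` V).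
  have -> : H `|` V = H `\ None `|` V.
    by apply/seteqP; split=> -[x|] /=; intuition congruence.
  by apply: topologyU2; [case: e2 => -[] | exact: pointed_ext_openD_None e2 e1 O1H |].
have [_ /(_ (or_introl HN)) cHV] := pushout_sq_open O1HV O2HV.
have [E [N1E EN EC]] := pointed_ext_separate_compact eN1 cHV.
exists (H `\ None `|` E); split.
  by apply: topologyU2; [case: eN1 => -[] | exact: pointed_ext_openD_None eN1 e1 O1H |].
move=> [x|] nDx /=; last by split=> // _; right.
have nVx : ~ V (Some x) by move=> Vx; apply: nDx.
split=> [Hx | [[Hx _] // | Ex]]; first by left.
have : (H `|` V) (Some x) by apply: contrapT => nHVx; exact: EC x nHVx Ex.
by case.
Qed.

Lemma rel_ext_from_negation : rel_ext N1 O2.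
Proof.
move=> V O2V; case: n1 => eN1 pbN1 _.
have [VN | VN] := pselect (V None); last first.
  apply: pointed_ext_open_unpointed eN1 VN _; exact: pointed_ext_open_some e2 O2V.
have N1D : N1 (V `\ None) by exact: pointed_ext_openD_None eN1 e2 O2V.
have cghD : is_cgh (discretize N1 (V `\ None)) by apply: discretize_cgh; case: eN1.
have idD : continuousT (discretize N1 (V `\ None)) (@plus_top X) id.
  apply: (@pbN1 _ _ cghD id (discretize_negation_continuous O2V VN)) => U.
  exact: discretize_open.
have [|W [N1W hW]] := idD [set None].
  rewrite /plus_top /=; suff -> : Some @^-1` [set None] = set0 :> set X by exact: open0.
  by apply/seteqP; split.
have -> : V = V `\ None `|` W.
  apply/seteqP; split=> -[x|] /=.
  - by move=> Vx; left.
  - by move=> _; right; apply: (proj1 (hW None _)) => // -[_]; apply.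
  - case=> [[] // | Wx]; have [[Vx _] // | nDx] := pselect ((V `\ None) (Some x)).
    by have := proj2 (hW _ nDx) Wx.
  - by case=> [[]|].
by apply: topologyU2 => //; case: eN1 => -[].
Qed.

Lemma negation_eq : N1 = O2.
Proof.
apply/funext => V; apply/propext; split => OV.
  exact: (rel_ext_into_negation OV).
exact: (rel_ext_from_negation OV).
Qed.

End NegationOfSquare.

Theorem mainTheorem11 (X : topologicalType)
  (hX : hausdorff_space X) (lcX : locally_compact [set: X])
  (O2 O1 : set (set (option X))) (* O2 = X''_*, O1 = X'_* *)
  (e2 : pointed_ext O2) (e1 : pointed_ext O1)
  (r2 : rel_ext (@plus_top X) O2) (r1 : rel_ext (@plus_top X) O1)
  (s2 : rel_ext O2 (@oneptc_top X)) (s1 : rel_ext O1 (@oneptc_top X))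
  (pb : is_pullback_sq O2 O1) (po : is_pushout_sq O2 O1) :
  forall N2 N1 : set (set (option X)),
    is_negation O2 N2 -> is_negation O1 N1 ->
    is_negation N1 N2 /\ is_negation N2 N1.
Proof.
move=> N2 N1 n2 n1.
have eqN1 := negation_eq hX lcX e1 e2 s1 s2 pb po n1.
have eqN2 := negation_eq hX lcX e2 e1 s2 s1 (pullback_sq_sym pb) (pushout_sq_sym po) n2.
by subst N1 N2.
Qed.
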